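(* Let $G_H$ be a finite undirected multigraph (parallel edges allowed, no self-loops) with vertex set $V$ and edge set partitioned as $E = S \sqcup S^c$ into secure edges $S$ and insecure edges $S^c$, and let $0 < p_J^{S^c} \le p_I$ be real costs. Let $C^*$ be a cut of minimum cardinality among the cuts of $G_H$ containing no secure edges. Then the attack $(C^*, J, I)$ with $I = \{e\}$ for some edge $e \in C^*$ and $J = C^* \setminus\{e\}$ is an optimal hidden jamming attack, for all such costs $p_I$ and $p_J^{S^c}$.
   Context: For a nonempty proper subset $U \subsetneq V$, the cut $\delta(U)$ is the set of edges with exactly one endpoint in $U$; a cut is any set of this form. A jamming attack is a triple $(C,J,I)$ where $C$ is a cut, $J \subseteq C \cap S^c$ is a set of jammed insecure edges, and $I \subseteq (C \cap S^c)\setminus J$ is a nonempty set of insecure edges into which data is injected; its cost is $p_J^{S^c}|J| + p_I|I|$. It is hidden if $I \cup J = C$. An optimal hidden jamming attack is one of minimum cost among all hidden jamming attacks. *)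

From HB Require Import structures.
From mathcomp Require Import all_boot all_order all_algebra.
Set Implicit Arguments. Unset Strict Implicit. Unset Printing Implicit Defensive.
Import Order.TTheory GRing.Theory Num.Theory.
Local Open Scope ring_scope.

(* A finite multigraph: vertex type V, edge type E (finTypes), each edge e
   has endpoints (ends e).1 and (ends e).2 (parallel edges allowed since
   distinct edges may share endpoints).  No self-loops is a hypothesis. *)

Section Jamming.
Variables (V E : finType) (ends : E -> V * V) (S : {set E}).

Definition cut_of (U : {set V}) : {set E} :=
  [set e | ((ends e).1 \in U) != ((ends e).2 \in U)].

Definition is_cut (C : {set E}) : Prop :=
  exists U : {set V}, [/\ U != set0, U != setT & C = cut_of U].

Definition jamming_attack (C J I : {set E}) : Prop :=
  [/\ is_cut C,
      J \subset C :&: ~: S,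
      I \subset (C :&: ~: S) :\: J
    & I != set0].

Definition hidden (C J I : {set E}) : Prop := I :|: J = C.

Definition hidden_jamming_attack (C J I : {set E}) : Prop :=
  jamming_attack C J I /\ hidden C J I.

Definition attack_cost (R : numDomainType) (pJ pI : R) (J I : {set E}) : R :=
  pJ * #|J|%:R + pI * #|I|%:R.

Definition optimal_hidden_jamming_attack (R : numDomainType) (pJ pI : R)
    (C J I : {set E}) : Prop :=
  hidden_jamming_attack C J I /\
  forall C' J' I' : {set E}, hidden_jamming_attack C' J' I' ->
    attack_cost pJ pI J I <= attack_cost pJ pI J' I'.

Definition min_insecure_cut (C : {set E}) : Prop :=
  [/\ is_cut C, [disjoint C & S]
    & forall C' : {set E}, is_cut C' -> [disjoint C' & S] -> #|C| <= #|C'|]%N.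

End Jamming.

From HB Require Import structures.
From mathcomp Require Import all_boot all_order all_algebra.
From mathcomp Require Import lra.
Set Implicit Arguments. Unset Strict Implicit. Unset Printing Implicit Defensive.
Import Order.TTheory GRing.Theory Num.Theory.
Local Open Scope ring_scope.

(** A hidden attack (C, J, I) jams or injects on every edge of C, so C
    contains no secure edge and |C| = |I| + |J|.  Minimality of C* then gives
    |I| + |J| >= |C*|, and since jamming is no dearer than injecting, the
    cheapest split of such a cut uses a single injected edge. *)

Section HiddenAttacks.
Variables (V E : finType) (ends : E -> V * V) (S : {set E}).

Lemma jamming_attack_disjoint (C J I : {set E}) :
  jamming_attack ends S C J I -> [disjoint I & J].
Proof.
case=> _ _ sI _; rewrite disjoints_subset (subset_trans sI) //.
by apply/subsetP => x; rewrite !inE => /andP[].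
Qed.

Lemma hidden_jamming_attack_disjoint_secure (C J I : {set E}) :
  hidden_jamming_attack ends S C J I -> [disjoint C & S].
Proof.
case=> -[_ sJ sI _] <-; rewrite disjoints_subset subUset.
have CnS : C :&: ~: S \subset ~: S by exact: subsetIr.
by rewrite (subset_trans sJ CnS) (subset_trans sI) // (subset_trans (subsetDl _ _)).
Qed.

Lemma hidden_jamming_attack_card (C J I : {set E}) :
  hidden_jamming_attack ends S C J I -> #|C| = (#|I| + #|J|)%N.
Proof.
case=> att <-.
by rewrite cardsU (disjoint_setI0 (jamming_attack_disjoint att)) cards0 subn0.
Qed.

Lemma min_insecure_cut_card_le (C C' J' I' : {set E}) :
  min_insecure_cut ends S C -> hidden_jamming_attack ends S C' J' I' ->
  (#|C| <= #|I'| + #|J'|)%N.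
Proof.
case=> _ _ minC hid; rewrite -(hidden_jamming_attack_card hid).
by apply: minC (hidden_jamming_attack_disjoint_secure hid); case: hid => -[].
Qed.

Lemma min_insecure_cut_hidden_attack (C : {set E}) (e : E) :
  min_insecure_cut ends S C -> e \in C ->
  hidden_jamming_attack ends S C (C :\ e) [set e].
Proof.
case=> cutC disC _ eC; have CnS : C \subset ~: S by rewrite -disjoints_subset.
split; last by rewrite /hidden setD1K.
split=> //; last by apply/set0Pn; exists e; rewrite inE.
- by rewrite subsetI subD1set (subset_trans (subD1set _ _)).
- by rewrite sub1set !inE eqxx eC -in_setC (subsetP CnS).
Qed.

End HiddenAttacks.

Lemma single_injection_cost_le (R : realDomainType) (pJ pI : R) (c i j : nat) :
  0 <= pJ -> pJ <= pI -> (c <= i + j)%N -> (0 < i)%N ->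
  pJ * c.-1%:R + pI * 1%:R <= pJ * j%:R + pI * i%:R.
Proof.
move=> pJ_ge0 pJI; case: i => // i; rewrite addSn => le_c _.
have {le_c} : (c.-1 <= i + j)%N by case: c le_c.
rewrite -(ler_nat R) natrD => le_c.
have pJ_c : pJ * c.-1%:R <= pJ * i%:R + pJ * j%:R by rewrite -mulrDr ler_wpM2l.
have pJ_i : pJ * i%:R <= pI * i%:R by rewrite ler_wpM2r.
by rewrite -addn1 natrD; lra.
Qed.

Theorem theorem2 (V E : finType) (ends : E -> V * V)
    (no_loops : forall e : E, (ends e).1 != (ends e).2)
    (S : {set E}) (Cstar : {set E})
    (HC : min_insecure_cut ends S Cstar)
    (e : E) (He : e \in Cstar)
    (R : realFieldType) (pJ pI : R) (HpJ : 0 < pJ) (HpJI : pJ <= pI) :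
  optimal_hidden_jamming_attack ends S pJ pI Cstar (Cstar :\ e) [set e].
Proof.
split; first exact: min_insecure_cut_hidden_attack.
move=> C' J' I' hid; rewrite /attack_cost cards1.
have -> : #|Cstar :\ e| = #|Cstar|.-1 by rewrite (cardsD1 e Cstar) He.
apply: single_injection_cost_le => //; first exact: ltW.
- exact: min_insecure_cut_card_le hid.
- by case: hid => -[_ _ _]; rewrite card_gt0.
Qed.
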